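(* Let $\widetilde{\mathsf{Op}}$ be the GPT associated with an operational theory. Then $\widetilde{\mathsf{Op}}$ is tomographically local if and only if, for every system $A$, every linearly independent spanning set of states $\{\widetilde P^A_j\}_{j=1}^{m^A}$ and every linearly independent spanning set of effects $\{\widetilde E^A_i\}_{i=1}^{m^A}$, the $m^A\times m^A$ matrix $\mathbf{N}_{\widetilde{\mathbb 1}_A}$ with entries $(\mathbf{N}_{\widetilde{\mathbb 1}_A})_{j,i}:=\widetilde E^A_j\circ\widetilde P^A_i$ is invertible and, writing $\mathbf{M}_{\widetilde{\mathbb 1}_A}:=\mathbf{N}_{\widetilde{\mathbb 1}_A}^{-1}$, the identity process on $A$ decomposes as $$\widetilde{\mathbb 1}_A=\sum_{i,j=1}^{m^A}(\mathbf{M}_{\widetilde{\mathbb 1}_A})_{j,i}\;\widetilde P^A_j\circ\widetilde E^A_i .$$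
   Context: A process theory consists of systems (closed under composition $\otimes$, with trivial system $I$) and processes, closed under sequential composition $\circ$ and parallel composition $\otimes$, with identities; processes $I\to A$ are states, $A\to I$ effects. An operational theory is a process theory of procedures with a probability rule $p$ assigning each closed diagram a value in $[0,1]$; two procedures of the same type are operationally equivalent if they yield equal probabilities when plugged into any tester $\tau=(s,e,W)$ ($s:I\to A\otimes W$, $e:B\otimes W\to I$, yielding $e\circ(T\otimes\mathrm{id}_W)\circ s$); finitely many testers suffice for each type. The associated GPT $\widetilde{\mathsf{Op}}$ has as processes the equivalence classes, composed via representatives; closed diagrams are real numbers (probabilities); each class of type $A\to B$ is identified with its vector of probabilities on a finite tomographically complete set of testers, so linear combinations of processes of a given type are elements of a finite-dimensional real vector space, and sequential and parallel composition extend bilinearly to these linear combinations. For a system $A$, the states of $A$ span a finite-dimensional vector space of dimension $m^A$ and the effects on $A$ span a space of the same dimension; a ''linearly independent spanning set'' of states (effects) is a basis of this span consisting of states (effects). For an effect $E$ on $A$ and a state $P$ of $B$, $P\circ E$ denotes the process $A\to B$ obtained by sequential composition through the trivial system. $\widetilde{\mathsf{Op}}$ is tomographically local if any two processes of the same type (possibly with several input systems $A_1,\dots$ and output systems $B_1,\dots$) that give equal probabilities when composed with all products of states on their inputs and all products of effects on their outputs are equal. *)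

From HB Require Import structures.
From mathcomp Require Import all_boot all_order all_algebra.
From mathcomp Require Import reals.
Set Implicit Arguments.
Unset Strict Implicit.
Unset Printing Implicit Defensive.
Import Order.TTheory GRing.Theory Num.Theory.
Local Open Scope ring_scope.

(* Systems are finite lists of elementary systems (strict monoid):
   trivial system I = [::], composite A (x) B = A ++ B. *)

Definition castLin (Atom : Type) (R : realType)
  (Lin : seq Atom -> seq Atom -> vectType R)
  (A A' B B' : seq Atom) (eA : A = A') (eB : B = B') (f : Lin A B) : Lin A' B' :=
  match eA in _ = X return Lin X B' with
  | erefl => match eB in _ = Y return Lin A Y with erefl => f end
  end.

(* The GPT associated with an operational theory, axiomatized through the
   structure it has: for each pair of systems, the finite-dimensional real
   vector space Lin A B of linear combinations of (equivalence classes of)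
   processes A -> B; a predicate [gpt_proc] singling out the actual processes;
   bilinear sequential / parallel composition; identities; closed diagrams
   are reals (via the linear iso [gpt_tor]); every element is determined by its
   values on testers (s, e, W). *)
Record GPT (R : realType) := MkGPT {
  Atom : Type;
  Lin : seq Atom -> seq Atom -> vectType R;
  gpt_proc : forall A B, Lin A B -> Prop;
  gpt_comp : forall A B C, Lin B C -> Lin A B -> Lin A C;
  gpt_par : forall A B C D, Lin A B -> Lin C D -> Lin (A ++ C) (B ++ D);
  gpt_id : forall A, Lin A A;
  gpt_tor : Lin [::] [::] -> R;
  tor_lin : forall (a : R) (x y : Lin [::] [::]), gpt_tor (a *: x + y) = a * gpt_tor x + gpt_tor y;
  tor_inj : injective gpt_tor;
  tor_id : gpt_tor (gpt_id [::]) = 1;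
  tor_proc : forall s : Lin [::] [::], gpt_proc s -> 0 <= gpt_tor s <= 1;
  comp_linl : forall A B C (a : R) (f g : Lin B C) (h : Lin A B),
      gpt_comp (a *: f + g) h = a *: gpt_comp f h + gpt_comp g h;
  comp_linr : forall A B C (a : R) (f : Lin B C) (g h : Lin A B),
      gpt_comp f (a *: g + h) = a *: gpt_comp f g + gpt_comp f h;
  par_linl : forall A B C D (a : R) (f g : Lin A B) (h : Lin C D),
      gpt_par (a *: f + g) h = a *: gpt_par f h + gpt_par g h;
  par_linr : forall A B C D (a : R) (f : Lin A B) (g h : Lin C D),
      gpt_par f (a *: g + h) = a *: gpt_par f g + gpt_par f h;
  compA : forall A B C D (h : Lin C D) (g : Lin B C) (f : Lin A B),
      gpt_comp h (gpt_comp g f) = gpt_comp (gpt_comp h g) f;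
  comp_idl : forall A B (f : Lin A B), gpt_comp (gpt_id B) f = f;
  comp_idr : forall A B (f : Lin A B), gpt_comp f (gpt_id A) = f;
  interchange : forall A B C D E F (f : Lin B C) (f' : Lin A B)
      (g : Lin E F) (g' : Lin D E),
      gpt_comp (gpt_par f g) (gpt_par f' g') = gpt_par (gpt_comp f f') (gpt_comp g g');
  par_id : forall A B, gpt_par (gpt_id A) (gpt_id B) = gpt_id (A ++ B);
  par_idl : forall A B (f : Lin A B), gpt_par (gpt_id [::]) f = f;
  par_idr : forall A B (f : Lin A B),
      gpt_par f (gpt_id [::]) = @castLin Atom R Lin _ _ _ _ (esym (cats0 A)) (esym (cats0 B)) f;
  proc_id : forall A, gpt_proc (gpt_id A);
  proc_comp : forall A B C (g : Lin B C) (f : Lin A B),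
      gpt_proc g -> gpt_proc f -> gpt_proc (gpt_comp g f);
  proc_par : forall A B C D (f : Lin A B) (g : Lin C D),
      gpt_proc f -> gpt_proc g -> gpt_proc (gpt_par f g);
  proc_span : forall A B (v : Lin A B),
      exists s : seq (Lin A B), (forall x, x \in s -> gpt_proc x) /\ (v \in <<s>>)%VS;
  tester_sep : forall A B (v : Lin A B),
      (forall (W : seq Atom) (s : Lin [::] (A ++ W)) (e : Lin (B ++ W) [::]),
          gpt_proc s -> gpt_proc e -> gpt_tor (gpt_comp e (gpt_comp (gpt_par v (gpt_id W)) s)) = 0) ->
      v = 0
}.

Arguments Lin {R} _ _ _.
Arguments gpt_proc {R} _ {A B} _.
Arguments gpt_comp {R} _ {A B C} _ _.
Arguments gpt_par {R} _ {A B C D} _ _.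
Arguments gpt_id {R} _ _.
Arguments gpt_tor {R} _ _.

Section Defs.
Variables (R : realType) (G : GPT R).

Definition state (A : seq (Atom G)) (p : Lin G [::] A) : Prop := gpt_proc G p.
Definition effect (A : seq (Atom G)) (e : Lin G A [::]) : Prop := gpt_proc G e.

Unset Implicit Arguments.
Inductive prod_state : forall As : seq (seq (Atom G)),
    Lin G [::] (flatten As) -> Prop :=
| ps_nil : prod_state [::] (gpt_id G [::])
| ps_cons (A : seq (Atom G)) (As : seq (seq (Atom G)))
    (p : Lin G [::] A) (v : Lin G [::] (flatten As)) :
    state p -> prod_state As v -> prod_state (A :: As) (gpt_par G p v).

Inductive prod_effect : forall Bs : seq (seq (Atom G)),
    Lin G (flatten Bs) [::] -> Prop :=
| pe_nil : prod_effect [::] (gpt_id G [::])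
| pe_cons (B : seq (Atom G)) (Bs : seq (seq (Atom G)))
    (e : Lin G B [::]) (v : Lin G (flatten Bs) [::]) :
    effect e -> prod_effect Bs v -> prod_effect (B :: Bs) (gpt_par G e v).

Set Implicit Arguments.
Arguments prod_state {As} _.
Arguments prod_effect {Bs} _.

Definition tomographically_local : Prop :=
  forall (As Bs : seq (seq (Atom G))) (f g : Lin G (flatten As) (flatten Bs)),
    (forall (ps : Lin G [::] (flatten As)) (es : Lin G (flatten Bs) [::]),
        prod_state ps -> prod_effect es ->
        gpt_tor G (gpt_comp G es (gpt_comp G f ps)) = gpt_tor G (gpt_comp G es (gpt_comp G g ps))) ->
    f = g.

Definition states_basis (A : seq (Atom G)) n (P : n.-tuple (Lin G [::] A)) : Prop :=
  (forall j, state (tnth P j)) /\ free P /\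
  (forall p : Lin G [::] A, state p -> (p \in <<P>>)%VS).

Definition effects_basis (A : seq (Atom G)) n (E : n.-tuple (Lin G A [::])) : Prop :=
  (forall i, effect (tnth E i)) /\ free E /\
  (forall e : Lin G A [::], effect e -> (e \in <<E>>)%VS).

Definition Nmx (A : seq (Atom G)) n (P : n.-tuple (Lin G [::] A))
    (E : n.-tuple (Lin G A [::])) : 'M[R]_n :=
  \matrix_(j < n, i < n) gpt_tor G (gpt_comp G (tnth E j) (tnth P i)).

End Defs.

From Pilot Require Import Defs.
From HB Require Import structures.
From mathcomp Require Import all_boot all_order all_algebra.
From mathcomp Require Import reals.
From Stdlib Require Import Eqdep_dec.
Import GRing.Theory.
Set Implicit Arguments.
Unset Strict Implicit.
Unset Printing Implicit Defensive.
Local Open Scope ring_scope.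

(* States separate effects and effects separate states (the tester axiom,
   with the ancilla discarded into the state or the effect), so the matrix N
   of probabilities E_j o P_i has full rank on both sides and is invertible.
   If the GPT is tomographically local, a process A -> A is fixed by its
   statistics E_k o - o P_l; those of sum_{i,j} M_{ji} P_j o E_i are the
   entries of N M N = N, which are the statistics of the identity.
   Conversely, tensoring these decompositions of the identity decomposes the
   identity of every composite system as sum_t c_t p_t o e_t with product
   states p_t and product effects e_t; sandwiching a process f between two
   such decompositions writes f as a combination whose coefficients are the
   probabilities e_u o f o p_t, so these probabilities determine f. *)

Lemma coord_span_tnth (K : fieldType) (V : vectType K) n (X : n.-tuple V) v :
  (v \in <<X>>)%VS -> v = \sum_(i < n) coord X i v *: tnth X i.
Proof.
by move=> /coord_span {1}->; apply: eq_bigr => i _; rewrite (tnth_nth 0).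
Qed.

Lemma ex_free_subseq_span (K : fieldType) (V : vectType K) (S : seq V) :
  exists2 S' : seq V, {subset S' <= S} & free S' /\ <<S'>>%VS = <<S>>%VS.
Proof.
elim: S => [|x S [S' sub [freeS' spanS']]]; first by exists [::]; rewrite ?nil_free.
have [xS'|xS'] := boolP (x \in <<S'>>%VS).
  exists S'; first by move=> y /sub yS; rewrite inE yS orbT.
  by split=> //; rewrite span_cons -spanS'; apply/esym/addv_idPr.
exists (x :: S'); first by move=> y; rewrite !inE => /orP[->|/sub ->]; rewrite ?orbT.
by rewrite free_cons xS' freeS' !span_cons spanS'.
Qed.

Lemma row_free_linear_rows (K : fieldType) (U : vectType K) m n (X : m.-tuple U)
    (phi : U -> 'rV[K]_n) :
  linear phi -> (forall u, phi u = 0 -> u = 0) -> free X ->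
  row_free (\matrix_(j < m) phi (tnth X j)).
Proof.
move=> phi_lin phi_inj freeX.
pose Phi : {linear U -> 'rV[K]_n} :=
  HB.pack phi (GRing.isLinear.Build _ _ _ _ phi phi_lin).
apply/inj_row_free => v vM0; apply/rowP => j; rewrite mxE.
have comb0 : \sum_(k < m) v 0 k *: tnth X k = 0.
  apply: phi_inj; rewrite -[phi _]/(Phi _) linear_sum -[RHS]vM0 mulmx_sum_row.
  by apply: eq_bigr => k _; rewrite linearZ rowK.
move/freeP: freeX => /(_ (v 0)) -> //.
by rewrite -[RHS]comb0; apply: eq_bigr => k _; rewrite (tnth_nth 0).
Qed.

(* [par_idr] at the trivial system casts along the opaque [cats0 [::]].
   Equality with [[::]] is decidable, so UIP holds there without axioms. *)
Lemma nil_eq_refl (T : Type) (e : [::] = [::] :> seq T) : e = erefl.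
Proof. by apply: eq_proofs_unicity_on => -[|x s]; [left | right]. Qed.

Section Bilinearity.
Variables (R : realType) (G : GPT R).

Lemma gpt_comp_is_bilinear A B C : bilinear_for *:%R *:%R (@gpt_comp R G A B C).
Proof. by split=> [h|f] a x y; rewrite ?comp_linl ?comp_linr. Qed.

Lemma gpt_par_is_bilinear A B C D : bilinear_for *:%R *:%R (@gpt_par R G A B C D).
Proof. by split=> [h|f] a x y; rewrite ?par_linl ?par_linr. Qed.

Lemma gpt_tor_is_linear : linear_for *%R (gpt_tor G).
Proof. by move=> a x y; rewrite tor_lin. Qed.

End Bilinearity.

HB.instance Definition _ (R : realType) (G : GPT R) A B C :=
  bilinear_isBilinear.Build R (Lin G B C) (Lin G A B) (Lin G A C) _ _
    (@gpt_comp R G A B C) (@gpt_comp_is_bilinear R G A B C).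

HB.instance Definition _ (R : realType) (G : GPT R) A B C D :=
  bilinear_isBilinear.Build R (Lin G A B) (Lin G C D) (Lin G (A ++ C) (B ++ D)) _ _
    (@gpt_par R G A B C D) (@gpt_par_is_bilinear R G A B C D).

HB.instance Definition _ (R : realType) (G : GPT R) :=
  GRing.isLinear.Build R (Lin G [::] [::]) R _ (gpt_tor G) (@gpt_tor_is_linear R G).

Section GPTTheory.
Variables (R : realType) (G : GPT R).
Local Notation L := (Lin G).
Local Notation comp := (gpt_comp G).
Local Notation par := (gpt_par G).
Local Notation tor := (gpt_tor G).

Lemma closed_diagramE (z : L [::] [::]) : z = tor z *: gpt_id G [::].
Proof. by apply: tor_inj; rewrite linearZ /= tor_id mulr1. Qed.

Lemma gpt_tor_comp (x y : L [::] [::]) : tor (comp x y) = tor x * tor y.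
Proof.
rewrite (closed_diagramE x) (closed_diagramE y) linearZl_LR linearZr_LR /= comp_idl.
by rewrite !linearZ /= tor_id !mulr1.
Qed.

Lemma castLin_inj A A' B B' (eA : A = A') (eB : B = B') (f g : L A B) :
  castLin eA eB f = castLin eA eB g -> f = g.
Proof. by case: A' / eA; case: B' / eB. Qed.

Lemma proc_castLin A A' B B' (eA : A = A') (eB : B = B') (f : L A B) :
  gpt_proc G f -> gpt_proc G (castLin eA eB f).
Proof. by case: A' / eA; case: B' / eB. Qed.

Lemma comp_castLin_effect A A' (eA : A = A') (e : L A [::]) (q : L [::] A') :
  comp (castLin eA (erefl [::]) e) q = comp e (castLin (erefl [::]) (esym eA) q).
Proof. by case: A' / eA q. Qed.

Lemma comp_castLin_state A A' (eA : A = A') (x : L A' [::]) (p : L [::] A) :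
  comp x (castLin (erefl [::]) eA p) = comp (castLin (esym eA) (erefl [::]) x) p.
Proof. by case: A' / eA x. Qed.

Lemma par_id0r_effect A (e : L A [::]) :
  par e (gpt_id G [::]) = castLin (esym (cats0 A)) (erefl [::]) e.
Proof. by rewrite par_idr (nil_eq_refl (esym (cats0 [::]))). Qed.

Lemma par_id0r_state A (p : L [::] A) :
  par p (gpt_id G [::]) = castLin (erefl [::]) (esym (cats0 A)) p.
Proof. by rewrite par_idr (nil_eq_refl (esym (cats0 [::]))). Qed.

Lemma states_separate_effects A (e : L A [::]) :
  (forall p, state p -> tor (comp e p) = 0) -> e = 0.
Proof.
move=> e0; apply: tester_sep => W s x s_proc x_proc.
rewrite Defs.compA -{1}(par_idl x) (Defs.interchange (gpt_id G [::]) e x (gpt_id G W)).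
rewrite comp_idl comp_idr.
have -> : par e x = comp (par e (gpt_id G [::])) (par (gpt_id G A) x).
  by rewrite Defs.interchange comp_idl comp_idr.
rewrite -Defs.compA par_id0r_effect comp_castLin_effect; apply: e0.
apply/proc_castLin/proc_comp/s_proc.
exact: proc_par (proc_id A) x_proc.
Qed.

Lemma effects_separate_states A (p : L [::] A) :
  (forall e, effect e -> tor (comp e p) = 0) -> p = 0.
Proof.
move=> p0; apply: tester_sep => W s x s_proc x_proc.
rewrite -{1}(par_idl s) (Defs.interchange p (gpt_id G [::]) (gpt_id G W) s).
rewrite comp_idl comp_idr.
have -> : par p s = comp (par (gpt_id G A) s) (par p (gpt_id G [::])).
  by rewrite Defs.interchange comp_idl comp_idr.
rewrite Defs.compA par_id0r_state comp_castLin_state; apply: p0.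
apply/proc_castLin/(proc_comp x_proc).
exact: proc_par (proc_id A) s_proc.
Qed.

Lemma prod_state_singleton A (ps : L [::] (flatten [:: A])) :
  prod_state R G [:: A] ps -> exists2 p, state p & ps = par p (gpt_id G [::]).
Proof.
have gen As (v : L [::] (flatten As)) : prod_state R G As v ->
    match As return L [::] (flatten As) -> Prop with
    | [::] => fun v => v = gpt_id G [::]
    | [:: A] => fun v => exists2 p, state p & v = par p (gpt_id G [::])
    | _ => fun _ => True
    end v.
  by elim=> [|A' [|? ?] p v' p_st _ IH] //=; exists p; rewrite ?IH.
exact: gen.
Qed.

Lemma prod_effect_singleton B (es : L (flatten [:: B]) [::]) :
  prod_effect R G [:: B] es -> exists2 e, effect e & es = par e (gpt_id G [::]).
Proof.
have gen Bs (v : L (flatten Bs) [::]) : prod_effect R G Bs v ->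
    match Bs return L (flatten Bs) [::] -> Prop with
    | [::] => fun v => v = gpt_id G [::]
    | [:: B] => fun v => exists2 e, effect e & v = par e (gpt_id G [::])
    | _ => fun _ => True
    end v.
  by elim=> [|B' [|? ?] e v' e_eff _ IH] //=; exists e; rewrite ?IH.
exact: gen.
Qed.

Definition pairing_mx A m n (P : n.-tuple (L [::] A)) (E : m.-tuple (L A [::])) :
    'M[R]_(m, n) :=
  \matrix_(j < m, i < n) tor (comp (tnth E j) (tnth P i)).

Lemma pairing_mx_row_free A m n (P : n.-tuple (L [::] A)) (E : m.-tuple (L A [::])) :
  (forall p, state p -> (p \in <<P>>)%VS) -> free E -> row_free (pairing_mx P E).
Proof.
move=> spanP; have -> : pairing_mx P E =
    \matrix_(j < m) \row_(i < n) tor (comp (tnth E j) (tnth P i)).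
  by apply/matrixP => j i; rewrite !mxE.
apply: (row_free_linear_rows (phi := fun e => \row_i tor (comp e (tnth P i)))).
  by move=> a x y; apply/rowP => i; rewrite !mxE linearPl /= linearP.
move=> e /rowP e0; apply: states_separate_effects => p /spanP/coord_span_tnth ->.
rewrite linear_sumr /= linear_sum big1 // => i _.
by rewrite linearZr_LR /= linearZ /=; move: (e0 i); rewrite !mxE => ->; rewrite mulr0.
Qed.

Lemma pairing_mx_tr_row_free A m n (P : n.-tuple (L [::] A)) (E : m.-tuple (L A [::])) :
  (forall e, effect e -> (e \in <<E>>)%VS) -> free P -> row_free (pairing_mx P E)^T.
Proof.
move=> spanE; have -> : (pairing_mx P E)^T =
    \matrix_(i < n) \row_(j < m) tor (comp (tnth E j) (tnth P i)).
  by apply/matrixP => i j; rewrite !mxE.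
apply: (row_free_linear_rows (phi := fun p => \row_j tor (comp (tnth E j) p))).
  by move=> a x y; apply/rowP => j; rewrite !mxE linearPr /= linearP.
move=> p /rowP p0; apply: effects_separate_states => e /spanE/coord_span_tnth ->.
rewrite linear_sumlz /= linear_sum big1 // => j _.
by rewrite linearZl_LR /= linearZ /=; move: (p0 j); rewrite !mxE => ->; rewrite mulr0.
Qed.

Lemma basis_size A m n (P : n.-tuple (L [::] A)) (E : m.-tuple (L A [::])) :
  states_basis P -> effects_basis E -> m = n.
Proof.
move=> [_ [freeP spanP]] [_ [freeE spanE]]; apply/eqP; rewrite eqn_leq.
apply/andP; split.
  by rewrite -(eqP (pairing_mx_row_free spanP freeE)) rank_leq_col.
by rewrite -(eqP (pairing_mx_tr_row_free spanE freeP)) mxrank_tr rank_leq_row.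
Qed.

Lemma Nmx_unit A n (P : n.-tuple (L [::] A)) (E : n.-tuple (L A [::])) :
  states_basis P -> effects_basis E -> Nmx P E \in unitmx.
Proof.
move=> [_ [_ spanP]] [_ [freeE _]].
by rewrite -row_free_unit; exact: pairing_mx_row_free.
Qed.

Definition process_of_mx A n (P : n.-tuple (L [::] A)) (E : n.-tuple (L A [::]))
    (X : 'M[R]_n) : L A A :=
  \sum_(i < n) \sum_(j < n) X j i *: comp (tnth P j) (tnth E i).

Lemma tor_process_of_mx A n (P : n.-tuple (L [::] A)) (E : n.-tuple (L A [::]))
    (X : 'M[R]_n) k l :
  tor (comp (tnth E k) (comp (process_of_mx P E X) (tnth P l))) =
  (Nmx P E *m X *m Nmx P E) k l.
Proof.
rewrite mxE linear_sumlz /= linear_sumr /= linear_sum /=; apply: eq_bigr => i _.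
rewrite mxE mulr_suml linear_sumlz /= linear_sumr /= linear_sum /=.
apply: eq_bigr => j _.
rewrite linearZl_LR linearZr_LR /= linearZ /= -Defs.compA Defs.compA gpt_tor_comp.
by rewrite !mxE mulrCA mulrA.
Qed.

Section TomoLocal.
Hypothesis tomo_local : tomographically_local G.

Lemma tomo_local_eq A B (f g : L A B) :
  (forall p e, state p -> effect e ->
     tor (comp e (comp f p)) = tor (comp e (comp g p))) ->
  f = g.
Proof.
move=> fg; apply: (castLin_inj (eA := esym (cats0 A)) (eB := esym (cats0 B))).
rewrite -!par_idr; apply: (@tomo_local [:: A] [:: B]) => ps es.
move=> /prod_state_singleton[p p_st ->] /prod_effect_singleton[e e_eff ->].
have par_comp h : comp (par e (gpt_id G [::]))
      (comp (par h (gpt_id G [::])) (par p (gpt_id G [::])))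
    = par (comp e (comp h p)) (gpt_id G [::]).
  by rewrite !Defs.interchange !comp_idl.
by rewrite !par_comp (tor_inj (fg p e p_st e_eff)).
Qed.

Lemma tomo_local_eq_on_bases A B m n (P : n.-tuple (L [::] A))
    (E : m.-tuple (L B [::])) (f g : L A B) :
  (forall p, state p -> (p \in <<P>>)%VS) ->
  (forall e, effect e -> (e \in <<E>>)%VS) ->
  (forall k l, tor (comp (tnth E k) (comp f (tnth P l))) =
               tor (comp (tnth E k) (comp g (tnth P l)))) ->
  f = g.
Proof.
move=> spanP spanE fg; apply: tomo_local_eq => p e /spanP/coord_span_tnth ->.
move=> /spanE/coord_span_tnth ->.
rewrite !linear_sumlz /= !linear_sum /=; apply: eq_bigr => k _.
rewrite !linearZl_LR /= !linearZ /=; congr (_ * _).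
rewrite [comp f _]linear_sumr [comp g _]linear_sumr /= !linear_sumr /= !linear_sum /=.
apply: eq_bigr => l _.
by rewrite !linearZr_LR /= !linearZ /= fg.
Qed.

Lemma tomo_local_id_expansion A n (P : n.-tuple (L [::] A)) (E : n.-tuple (L A [::])) :
  states_basis P -> effects_basis E ->
  gpt_id G A = process_of_mx P E (invmx (Nmx P E)).
Proof.
move=> basisP basisE; have N_unit := Nmx_unit basisP basisE.
case: basisP basisE => [_ [_ spanP]] [_ [_ spanE]].
apply: (tomo_local_eq_on_bases spanP spanE) => k l.
by rewrite tor_process_of_mx mulmxV // mul1mx comp_idl mxE.
Qed.

End TomoLocal.

Definition decomposes_id X (r : seq (R * L [::] X * L X [::])) : Prop :=
  gpt_id G X = \sum_(t <- r) t.1.1 *: comp t.1.2 t.2.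

Lemma decomposes_id_par X Y (rX : seq (R * L [::] X * L X [::]))
    (rY : seq (R * L [::] Y * L Y [::])) :
  decomposes_id rX -> decomposes_id rY ->
  decomposes_id [seq (a.1.1 * b.1.1, par a.1.2 b.1.2, par a.2 b.2) | a <- rX, b <- rY].
Proof.
rewrite /decomposes_id => idX idY; rewrite big_allpairs_dep /= -par_id idX idY.
rewrite linear_sumlz /=; apply: eq_bigr => a _; rewrite linear_sumr /=.
apply: eq_bigr => b _; rewrite linearZl_LR linearZr_LR /= scalerA.
by rewrite (Defs.interchange a.1.2 a.2 b.1.2 b.2).
Qed.

Lemma decomposes_id_eq0 X Y (rX : seq (R * L [::] X * L X [::]))
    (rY : seq (R * L [::] Y * L Y [::])) (h : L X Y) :
  decomposes_id rX -> decomposes_id rY ->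
  (forall t u, t \in rX -> u \in rY -> tor (comp u.2 (comp h t.1.2)) = 0) ->
  h = 0.
Proof.
move=> idX idY h0.
have -> : h = comp (gpt_id G Y) (comp h (gpt_id G X)) by rewrite comp_idl comp_idr.
rewrite idY linear_sumlz /= big_seq big1 // => u uY.
rewrite idX linear_sumr /= linear_sumr /= big_seq big1 ?linear0r // => t tX.
have sandwich0 : comp u.2 (comp h t.1.2) = 0 by apply: tor_inj; rewrite h0 // linear0.
rewrite linearZr_LR linearZr_LR linearZl_LR /= -!Defs.compA.
rewrite (Defs.compA h) (Defs.compA u.2) sandwich0.
by rewrite linear0l linear0r !scaler0.
Qed.

Lemma span_procs B C (l : seq (L B C)) :
  exists2 S : seq (L B C), (forall x, x \in S -> gpt_proc G x) & (<<l>> <= <<S>>)%VS.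
Proof.
elim: l => [|v l [S S_proc lS]]; first by exists [::]; rewrite ?span_nil ?sub0v.
have [s [s_proc vs]] := proc_span v.
exists (s ++ S); first by move=> x; rewrite mem_cat => /orP[/s_proc|/S_proc].
by rewrite span_cons span_cat addvS // -memvE.
Qed.

Lemma exists_proc_basis B C : exists n, exists2 X : n.-tuple (L B C),
  forall j, gpt_proc G (tnth X j) & free X /\ forall v, (v \in <<X>>)%VS.
Proof.
have [S S_proc fullS] := span_procs (vbasis (fullv : {vspace L B C})).
have [S' S'S [freeS' spanS']] := ex_free_subseq_span S.
exists (size S'), (in_tuple S'); first by move=> j; apply/S_proc/S'S/mem_tnth.
split=> // v; rewrite /= spanS'; apply: (subvP fullS).
by rewrite (span_basis (vbasisP _)) memvf.
Qed.

Lemma exists_bases A : exists n, exists (P : n.-tuple (L [::] A))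
    (E : n.-tuple (L A [::])), states_basis P /\ effects_basis E.
Proof.
have [n [P P_proc [freeP spanP]]] := exists_proc_basis [::] A.
have [m [E E_proc [freeE spanE]]] := exists_proc_basis A [::].
have basisP : states_basis P by split=> //; split=> // p _; apply: spanP.
have basisE : effects_basis E by split=> //; split=> // e _; apply: spanE.
have mn := basis_size basisP basisE; subst m.
by exists n, P, E.
Qed.

Section IdExpansion.
Hypothesis id_expansion :
  forall A n (P : n.-tuple (L [::] A)) (E : n.-tuple (L A [::])),
    states_basis P -> effects_basis E ->
    gpt_id G A = process_of_mx P E (invmx (Nmx P E)).

Lemma exists_product_decomposition As :
  exists2 r : seq (R * L [::] (flatten As) * L (flatten As) [::]),
    forall t, t \in r -> prod_state R G As t.1.2 /\ prod_effect R G As t.2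
    & decomposes_id r.
Proof.
elim: As => [|A As [r r_prod id_r]].
  exists [:: (1, gpt_id G [::], gpt_id G [::])].
    by move=> t; rewrite inE => /eqP -> /=; split; constructor.
  by rewrite /decomposes_id big_seq1 scale1r comp_idl.
have [n [P [E [basisP basisE]]]] := exists_bases A.
pose rA := [seq (invmx (Nmx P E) j i, tnth P j, tnth E i)
           | i <- index_enum 'I_n, j <- index_enum 'I_n].
have id_rA : decomposes_id rA.
  by rewrite /decomposes_id big_allpairs_dep (id_expansion basisP basisE).
exists [seq (a.1.1 * b.1.1, par a.1.2 b.1.2, par a.2 b.2) | a <- rA, b <- r];
  last exact: decomposes_id_par.
move=> _ /allpairsP[[a b] [/allpairsP[[i j] [_ _ ->]] /r_prod[b_st b_eff] ->]] /=.
by split; [apply: ps_cons | apply: pe_cons] => //; [exact: basisP.1 | exact: basisE.1].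
Qed.

Lemma id_expansion_tomo_local : tomographically_local G.
Proof.
move=> As Bs f g fg; apply/eqP; rewrite -subr_eq0; apply/eqP.
have [rA rA_prod id_rA] := exists_product_decomposition As.
have [rB rB_prod id_rB] := exists_product_decomposition Bs.
apply: (decomposes_id_eq0 id_rA id_rB) => t u tA uB.
rewrite linearBl /= linearBr /= linearB /= fg ?subrr //.
  exact: (rA_prod t tA).1.
exact: (rB_prod u uB).2.
Qed.

End IdExpansion.

End GPTTheory.

Theorem lemma2 (R : realType) (G : GPT R) :
  tomographically_local G <->
  (forall (A : seq (Atom G)) (n : nat)
          (P : n.-tuple (Lin G [::] A)) (E : n.-tuple (Lin G A [::])),
      states_basis P -> effects_basis E ->
      Nmx P E \in unitmx /\
      gpt_id G A = \sum_(i < n) \sum_(j < n)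
                  (invmx (Nmx P E)) j i *: gpt_comp G (tnth P j) (tnth E i)).
Proof.
split=> [tomo_local A n P E basisP basisE | id_expansion].
  split; first exact: Nmx_unit.
  exact: tomo_local_id_expansion.
apply: id_expansion_tomo_local => A n P E basisP basisE.
exact: (id_expansion A n P E basisP basisE).2.
Qed.
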